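(* Let $K>0$, $\psi>0$, $E_{\max}>0$, $C>0$, and define, for $Q>\max\{1,C/E_{\max}\}$, $$\beta(Q)=K\sqrt{\frac{(e^{\psi Q}-e^{\psi})^3}{E_{\max}-C/Q}}.$$ On any interval of such $Q$ on which $3\psi^2e^{\psi}Q^2-2QE_{\max}+C\ge 0$ holds, the function $\beta$ is convex. Consequently, for every fixed $\kappa>0$ and $\varrho\in(0,1)$, the $\varrho$-quantile of $\mathrm{Gamma}(\kappa,\beta(Q))$ (shape $\kappa$, scale $\beta(Q)$) is a convex function of $Q$ on that interval.
   Context: For a Gamma distribution with shape $\kappa$ and scale $\beta$, the $\varrho$-quantile is $\beta\cdot\gamma^{-1}(\kappa,\Gamma(\kappa)\varrho)$. Here $\gamma(s,x)=\int_0^x t^{s-1}e^{-t}\,dt$ is the lower incomplete gamma function, $\gamma^{-1}$ denotes its inverse in the second argument, and $\Gamma$ is the Gamma function. *)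

From HB Require Import structures.
From mathcomp Require Import all_boot all_order all_algebra.
From mathcomp Require Import all_classical all_reals all_analysis.
Set Implicit Arguments. Unset Strict Implicit. Unset Printing Implicit Defensive.
Import Order.TTheory GRing.Theory Num.Theory.
Local Open Scope classical_set_scope.
Local Open Scope ring_scope.

Definition lower_gamma (R : realType) (s x : R) : R :=
  Rintegral (@lebesgue_measure R) `[0, x]
    (fun t => t `^ (s - 1) * expR (- t)).

Definition Gamma_fn (R : realType) (s : R) : R :=
  fine (\int[@lebesgue_measure R]_(t in (`[0%R, +oo[ : set R))
          ((t `^ (s - 1) * expR (- t))%:E))%E.

Definition lower_gamma_inv (R : realType) (s y : R) : R :=
  xget 0 [set x : R | 0 <= x /\ lower_gamma s x = y].

Definition gamma_quantile (R : realType) (kappa beta rho : R) : R :=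
  beta * lower_gamma_inv kappa (Gamma_fn kappa * rho).

Definition betaQ (R : realType) (K psi Emax C Q : R) : R :=
  K * Num.sqrt ((expR (psi * Q) - expR psi) ^+ 3 / (Emax - C / Q)).

Definition convex_on (R : realType) (I : set R) (f : R -> R) : Prop :=
  forall x y t, I x -> I y -> 0 <= t <= 1 ->
    f (t * x + (1 - t) * y) <= t * f x + (1 - t) * f y.

From HB Require Import structures.
From mathcomp Require Import all_boot all_order all_algebra.
From mathcomp Require Import all_classical all_reals all_analysis.
From mathcomp Require Import ring lra.

Import Order.TTheory GRing.Theory Num.Theory.
Local Open Scope classical_set_scope.
Local Open Scope ring_scope.

(* The map (s, t) |-> sqrt (s^3 / t) = t (s / t)^(3/2) is the perspective of
   the convex function u |-> u^(3/2), hence jointly convex on positive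
   arguments; it is nondecreasing in s and nonincreasing in t.  Composing it
   with the convex numerator e^(psi Q) - e^psi and the concave denominator
   Emax - C/Q makes beta convex on every interval where both stay positive.  The quantile is
   beta(Q) times a nonnegative constant, hence convex as well. *)

Section convexity_of_beta.
Local Set Implicit Arguments.
Local Unset Strict Implicit.

(* The power-mean inequality M_2 <= M_3 for two points with weights p and q,
   cleared of roots and denominators. *)
Lemma power_mean23_le (R : realFieldType) (p q a b : R) :
  0 <= p -> 0 <= q -> 0 <= a -> 0 <= b ->
  (p * a ^+ 2 + q * b ^+ 2) ^+ 3 <= (p + q) * (p * a ^+ 3 + q * b ^+ 3) ^+ 2.
Proof.
move=> p0 q0 a0 b0; rewrite -subr_ge0.
have -> : (p + q) * (p * a ^+ 3 + q * b ^+ 3) ^+ 2 - (p * a ^+ 2 + q * b ^+ 2) ^+ 3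
    = p * q * (a - b) ^+ 2 * (p * a ^+ 3 * (a + 2 * b) + q * b ^+ 3 * (b + 2 * a))
  by ring.
have ab0 : 0 <= a + 2 * b by lra.
have ba0 : 0 <= b + 2 * a by lra.
apply: mulr_ge0; first by rewrite mulr_ge0 ?sqr_ge0 ?mulr_ge0.
by rewrite addr_ge0 // mulr_ge0 // mulr_ge0 // exprn_ge0.
Qed.

Section sqrt_cube_div.
Variable R : rcfType.

Lemma mul_sqr_sqrt_div (s t : R) : 0 <= s -> 0 < t -> t * Num.sqrt (s / t) ^+ 2 = s.
Proof.
move=> s0 t0; rewrite sqr_sqrtr; last by rewrite divr_ge0 // ltW.
by rewrite mulrC divfK // gt_eqF.
Qed.

Lemma sqrt_cube_divE (s t : R) : 0 < s -> 0 < t ->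
  Num.sqrt (s ^+ 3 / t) = t * Num.sqrt (s / t) ^+ 3.
Proof.
move=> s0 t0; set a := Num.sqrt (s / t).
have sE : s = t * a ^+ 2 by rewrite mul_sqr_sqrt_div ?ltW.
rewrite [in LHS]sE (_ : (t * a ^+ 2) ^+ 3 / t = (t * a ^+ 3) ^+ 2); last first.
  by field; rewrite gt_eqF.
by rewrite sqrtr_sqr ger0_norm // mulr_ge0 ?exprn_ge0 ?sqrtr_ge0 ?ltW.
Qed.

Lemma sqrt_cube_div_le (s s' t t' : R) : 0 < s -> s <= s' -> 0 < t' -> t' <= t ->
  Num.sqrt (s ^+ 3 / t) <= Num.sqrt (s' ^+ 3 / t').
Proof.
move=> s0 ss' t'0 tt'.
have t0 : 0 < t by exact: lt_le_trans tt'.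
have s'0 : 0 < s' by exact: lt_le_trans ss'.
rewrite ler_sqrt; last by apply: divr_ge0; apply: ltW; rewrite ?exprn_gt0.
apply: ler_pM.
- by apply/exprn_ge0/ltW.
- by rewrite invr_ge0 ltW.
- by rewrite ler_pXn2r // nnegrE ltW.
- by rewrite lef_pV2.
Qed.

Lemma sqrt_cube_div_convex (s1 s2 t1 t2 l : R) :
  0 < s1 -> 0 < s2 -> 0 < t1 -> 0 < t2 -> 0 <= l <= 1 ->
  Num.sqrt ((l * s1 + (1 - l) * s2) ^+ 3 / (l * t1 + (1 - l) * t2)) <=
  l * Num.sqrt (s1 ^+ 3 / t1) + (1 - l) * Num.sqrt (s2 ^+ 3 / t2).
Proof.
move=> s10 s20 t10 t20 /andP[l0 l1].
(* With a = sqrt (s1 / t1) and b = sqrt (s2 / t2) this is power_mean23_le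
   for the weights l t1 and (1 - l) t2. *)
rewrite (sqrt_cube_divE s10 t10) (sqrt_cube_divE s20 t20).
set a := Num.sqrt (s1 / t1); set b := Num.sqrt (s2 / t2).
have s1E : s1 = t1 * a ^+ 2 by rewrite mul_sqr_sqrt_div ?ltW.
have s2E : s2 = t2 * b ^+ 2 by rewrite mul_sqr_sqrt_div ?ltW.
have p0 : 0 <= l * t1 by nra.
have q0 : 0 <= (1 - l) * t2 by nra.
have T0 : 0 < l * t1 + (1 - l) * t2 by nra.
set Y := l * (t1 * a ^+ 3) + (1 - l) * (t2 * b ^+ 3).
have Y0 : 0 <= Y.
  have a3 : 0 <= a ^+ 3 by rewrite exprn_ge0 ?sqrtr_ge0.
  have b3 : 0 <= b ^+ 3 by rewrite exprn_ge0 ?sqrtr_ge0.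
  by rewrite /Y (mulrA l) (mulrA (1 - l)); apply: addr_ge0; apply: mulr_ge0.
rewrite -(ger0_norm Y0) -sqrtr_sqr ler_sqrt ?sqr_ge0 // ler_pdivrMr // s1E s2E.
have := power_mean23_le p0 q0 (sqrtr_ge0 (s1 / t1)) (sqrtr_ge0 (s2 / t2)).
by rewrite -/a -/b /Y; lra.
Qed.

End sqrt_cube_div.

Section convex_on.
Variable R : realType.
Implicit Types (I : set R) (f g h : R -> R).

Definition concave_on I f := forall x y t, I x -> I y -> 0 <= t <= 1 ->
  t * f x + (1 - t) * f y <= f (t * x + (1 - t) * y).

Lemma is_interval_conv I x y t : is_interval I -> I x -> I y -> 0 <= t <= 1 ->
  I (t * x + (1 - t) * y).
Proof.
move=> HI Ix Iy /andP[t0 t1].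
have [xy|/ltW yx] := leP x y.
- by apply: (HI x y) => //; apply/andP; split; nra.
- by apply: (HI y x) => //; apply/andP; split; nra.
Qed.

Lemma convex_onMl I f c : 0 <= c -> convex_on I f -> convex_on I (fun x => c * f x).
Proof.
move=> c0 cf x y t Ix Iy t01.
have -> : t * (c * f x) + (1 - t) * (c * f y) = c * (t * f x + (1 - t) * f y) by ring.
exact/ler_wpM2l/cf.
Qed.

Lemma convex_onMr I f c : 0 <= c -> convex_on I f -> convex_on I (fun x => f x * c).
Proof.
move=> c0 cf x y t Ix Iy t01; rewrite ![_ * c]mulrC.
exact: convex_onMl c0 cf x y t Ix Iy t01.
Qed.

Lemma convex_onDr I f c : convex_on I f -> convex_on I (fun x => f x + c).
Proof.
move=> cf x y t Ix Iy t01.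
have -> : t * (f x + c) + (1 - t) * (f y + c) = t * f x + (1 - t) * f y + c by ring.
by rewrite lerD2r; exact: cf.
Qed.

Lemma convex_on_expRM I (a : R) : convex_on I (fun x => expR (a * x)).
Proof.
move=> x y t _ _ /andP[t0 t1].
have -> : a * (t * x + (1 - t) * y) = t * (a * x) + (1 - t) * (a * y) by ring.
exact: (@convex_expR R (Itv01 t0 t1) (a * x) (a * y)).
Qed.

Lemma concave_on_subr_div I (a c : R) : 0 <= c -> (forall x, I x -> 0 < x) ->
  concave_on I (fun x => a - c / x).
Proof.
move=> c0 Ipos x y t Ix Iy /andP[t0 t1].
have x0 := Ipos x Ix; have y0 := Ipos y Iy.
have z0 : 0 < t * x + (1 - t) * y by nra.
have inv_convex : (t * x + (1 - t) * y)^-1 <= t / x + (1 - t) / y.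
  rewrite -subr_ge0.
  have -> : t / x + (1 - t) / y - (t * x + (1 - t) * y)^-1
      = t * (1 - t) * (x - y) ^+ 2 / (x * y * (t * x + (1 - t) * y)).
    by field; rewrite !gt_eqF.
  apply: divr_ge0; first by apply: mulr_ge0; [nra | exact: sqr_ge0].
  by apply/ltW/mulr_gt0 => //; exact: mulr_gt0.
have := ler_wpM2l c0 inv_convex.
have -> : t * (a - c / x) + (1 - t) * (a - c / y) = a - c * (t / x + (1 - t) / y) by ring.
lra.
Qed.

Lemma convex_on_sqrt_cube_div I h g : is_interval I ->
  (forall x, I x -> 0 < h x) -> (forall x, I x -> 0 < g x) ->
  convex_on I h -> concave_on I g ->
  convex_on I (fun x => Num.sqrt (h x ^+ 3 / g x)).
Proof.
move=> HI hpos gpos ch cg x y t Ix Iy t01; have /andP[t0 t1] := t01.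
have Iz := is_interval_conv HI Ix Iy t01.
have hx := hpos x Ix; have hy := hpos y Iy; have gx := gpos x Ix; have gy := gpos y Iy.
have g_mean0 : 0 < t * g x + (1 - t) * g y by nra.
exact: le_trans (sqrt_cube_div_le (hpos _ Iz) (ch _ _ _ Ix Iy t01) g_mean0
  (cg _ _ _ Ix Iy t01)) (sqrt_cube_div_convex hx hy gx gy t01).
Qed.

End convex_on.

Lemma convex_on_betaQ (R : realType) (K psi Emax C : R) (I : set R) :
  0 <= K -> 0 < psi -> 0 < Emax -> 0 <= C -> is_interval I ->
  (forall Q, I Q -> 1 < Q /\ C / Emax < Q) ->
  convex_on I (betaQ K psi Emax C).
Proof.
move=> K0 psi0 Emax0 C0 HI HQ.
have Qpos Q : I Q -> 0 < Q by move=> /HQ[]; lra.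
apply: convex_onMl => //.
apply: convex_on_sqrt_cube_div => //.
- by move=> Q /HQ[Q1 _]; rewrite subr_gt0 ltr_expR; nra.
- move=> Q IQ; have [_] := HQ Q IQ; have Q0 := Qpos Q IQ.
  by rewrite subr_gt0 ltr_pdivrMr // ltr_pdivrMr // mulrC.
- exact/convex_onDr/convex_on_expRM.
- exact: concave_on_subr_div.
Qed.

Lemma lower_gamma_inv_ge0 (R : realType) (s y : R) : 0 <= lower_gamma_inv s y.
Proof. by rewrite /lower_gamma_inv; case: xgetP => // x _ []. Qed.

Lemma convex_on_gamma_quantile (R : realType) (I : set R) (f : R -> R) (kappa rho : R) :
  convex_on I f -> convex_on I (fun Q => gamma_quantile kappa (f Q) rho).
Proof. exact/convex_onMr/lower_gamma_inv_ge0. Qed.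

End convexity_of_beta.

Theorem mainTheorem3 (R : realType) (K psi Emax C : R) (I : set R) :
  (0 < K)%R -> (0 < psi)%R -> (0 < Emax)%R -> (0 < C)%R ->
  is_interval I ->
  (forall Q : R, I Q -> (1 < Q)%R /\ (C / Emax < Q)%R) ->
  (forall Q : R, I Q ->
     (0 <= 3 * psi ^+ 2 * expR psi * Q ^+ 2 - 2 * Q * Emax + C)%R) ->
  convex_on I (betaQ K psi Emax C) /\
  (forall kappa rho : R, (0 < kappa)%R -> (0 < rho < 1)%R ->
     convex_on I (fun Q => gamma_quantile kappa (betaQ K psi Emax C Q) rho)).
Proof.
move=> K0 psi0 Emax0 C0 HI HQ _.
have beta_convex := convex_on_betaQ (ltW K0) psi0 Emax0 (ltW C0) HI HQ.
by split=> // kappa rho _ _; exact: convex_on_gamma_quantile beta_convex.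
Qed.
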